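(* Let $h$ be a positive integer and $m=100h-1$. Write $(x_0X)^m=\sum_{i=0}^{m}a_iX^i$ in $A[X;D]$, where $a_i\in A(100h-1)$. Then there is an index $i>\frac34(m+1)$ such that $a_i\notin B_1$ and $a_j\in B_1$ for all $j>i$.
   Context: Let $K$ be a field and $A$ the free associative (non-unital) $K$-algebra on free generators $x_0,x_1,x_2,\dots$, with $K$-basis of monomials; $A^1$ is $A$ with unity adjoined. For $n\ge1$, $A(n)$ is the $K$-span of monomials of length $n$, and $A(0)=K$. For a monomial $s=x_{i_1}\cdots x_{i_n}$ write $s[q]=x_{i_q}$. Let $D$ be the derivation of $A$ with $D(x_i)=x_{i+1}$, and $A[X;D]$ the differential polynomial ring ($Xa=aX+D(a)$). $Z_1$ is the set of elements $a\in A$ of one of the forms: (1) $a=\kappa s$, $\kappa\in K$, $s$ a monomial of length $99$ with $s[3^p]=s[3^q]$ for some $0\le p<q\le 1$ (i.e. $s[1]=s[3]$); (2) $a=\kappa(s_1+s_2)$, $\kappa\in K$, $s_1,s_2$ monomials of length $99$, with integers $l_1>l_2\ge0$ such that $s_1[1]=x_{l_1}$, $s_1[3]=x_{l_2}$, $s_2[1]=x_{l_2}$, $s_2[3]=x_{l_1}$, and $s_1,s_2$ agree at all other positions. $B_1=\sum_{m\ge0}A(100m)\,Z_1\,A^1$ (the $K$-span of products $uzv$ with $u\in A(100m)$, $m\ge0$, $z\in Z_1$, $v\in A^1$). *)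

From HB Require Import structures.
From mathcomp Require Import all_boot all_algebra.
Set Implicit Arguments. Unset Strict Implicit. Unset Printing Implicit Defensive.
Import GRing.Theory.
Local Open Scope ring_scope.

(* A monomial x_{i_1} ... x_{i_n} is the word [:: i_1; ...; i_n] (seq nat);
   the empty word is the unit of A^1.  An element of A^1 is represented by a
   formal finite sum (list of (coefficient, word) pairs); its actual value is
   the coefficient function [ev]. Two formal sums denote the same element iff
   their [ev] agree. Elements of A are those with coefficient 0 on the empty word. *)
Definition word := seq nat.
Definition fsum (K : Type) := seq (K * word).

Section FreeAlg.
Variable K : fieldType.

Definition ev (p : fsum K) (w : word) : K := \sum_(t <- p | t.2 == w) t.1.

Definition fmul (p q : fsum K) : fsum K :=
  [seq (a.1 * b.1, a.2 ++ b.2) | a <- p, b <- q].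

Definition fscale (c : K) (p : fsum K) : fsum K := [seq (c * a.1, a.2) | a <- p].

(* the derivation D with D(x_i) = x_{i+1}, on a monomial (Leibniz rule) *)
Definition Dword (w : word) : fsum K :=
  [seq (1, set_nth 0%N w q (nth 0%N w q).+1) | q <- iota 0 (size w)].

Definition Dsum (p : fsum K) : fsum K :=
  flatten [seq fscale a.1 (Dword a.2) | a <- p].

(* Elements of A[X;D]: coefficient lists, the i-th entry is the coefficient of X^i
   (written on the left: sum a_i X^i). Multiplication uses
   (a X^i)(b X^j) = sum_k C(i,k) a D^k(b) X^(i-k+j), i.e. X a = a X + D(a). *)
Definition omul (P Q : seq (fsum K)) : seq (fsum K) :=
  mkseq (fun n =>
    flatten [seq
      flatten [seq
        flatten [seq
          (if (i - k + j == n)%N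
           then fscale ('C(i, k))%:R (fmul (nth [::] P i) (iter k Dsum (nth [::] Q j)))
           else [::])
        | j <- iota 0 (size Q)]
      | k <- iota 0 i.+1]
    | i <- iota 0 (size P)]) (size P + size Q).

Definition x0X : seq (fsum K) := [:: [::]; [:: (1, [:: 0%N])]].

(* (x_0 X)^m for m >= 1 *)
Definition x0Xpow (m : nat) : seq (fsum K) := iter m.-1 (omul x0X) x0X.

Definition coefA (m i : nat) : fsum K := nth [::] (x0Xpow m) i.

Definition inA (n : nat) (u : fsum K) : Prop :=
  forall w, ev u w != 0 -> size w = n.

(* positions are 1-based in the paper: s[q] = nth 0 s (q-1) *)
Definition inZ1 (z : fsum K) : Prop :=
  (exists (kappa : K) (s : word),
      size s = 99%N /\ nth 0%N s 0 = nth 0%N s 2 /\ ev z =1 ev [:: (kappa, s)])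
  \/
  (exists (kappa : K) (s1 s2 : word) (l1 l2 : nat),
      size s1 = 99%N /\ size s2 = 99%N /\ (l2 < l1)%N /\
      nth 0%N s1 0 = l1 /\ nth 0%N s1 2 = l2 /\
      nth 0%N s2 0 = l2 /\ nth 0%N s2 2 = l1 /\
      (forall q, q <> 0%N -> q <> 2%N -> nth 0%N s1 q = nth 0%N s2 q) /\
      ev z =1 ev [:: (kappa, s1); (kappa, s2)]).

(* B_1 = sum_{m>=0} A(100m) Z_1 A^1 : finite sums of products u z v,
   u in A(100 m_k), z in Z_1, v in A^1 (scalars are absorbed into u). *)
Definition inB1 (a : fsum K) : Prop :=
  exists l : seq (nat * fsum K * fsum K * fsum K),
    (forall t, t \in l -> inA (100 * t.1.1.1) t.1.1.2 /\ inZ1 t.1.2) /\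
    ev a =1 ev (flatten [seq fmul (fmul t.1.1.2 t.1.2) t.2 | t <- l]).

End FreeAlg.

From HB Require Import structures.
From mathcomp Require Import all_boot all_algebra.
From mathcomp Require Import zify ring.
From Stdlib Require Import Classical.
Set Implicit Arguments. Unset Strict Implicit. Unset Printing Implicit Defensive.
Import GRing.Theory.
Local Open Scope ring_scope.

(* Since X b = b X + D(b), induction on m shows that a_n is
      the sum of the words w of length m and letter sum m - n, each with the
      natural-number coefficient [weight 0 w] (Lemma coefA_ev); the induction
      step is Pascal's rule for weights (weightS).
   2. A functional killing B_1.  Split positions into blocks of 100 letters.
      For a sign vector bs of length h, the test word has in block t the
      letters x_1 x_e x_0 or x_0 x_e x_1 (as bs_t is true or false) followed
      by x_0's.  phi = signed sum of the coefficients of the 2^h test words.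
      A generator u z v of B_1 puts z at a block start: a first-kind z forces
      equal first and third letters there, which no test word has; a
      second-kind z = s + swap(s) cancels since swapping negates the sign.
   3. Evaluation.  Weights are multiplicative along blocks, so on
      a_i, i = m - (1+e) h, phi equals d^h where d is the signed weight of one
      block: d = 2 for e = 0, and d = 1 in characteristic 2 for e = 1.  So
      a_i is not in B_1, and i > 3(m+1)/4.
   4. The theorem takes the last such index, coefficients eventually being 0. *)

(* Words obtained from w by lowering one letter x_{a+1} to x_a: these are the
   words v such that w occurs in D(v). *)
Fixpoint lowerings (w : word) : seq word :=
  match w with
  | [::] => [::]
  | a :: w' => (if (0 < a)%N then [:: a.-1 :: w'] else [::])
               ++ map (cons a) (lowerings w')
  end.

Lemma size_lowerings w v : v \in lowerings w -> size v = size w.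
Proof.
elim: w v => [|a w IH] v //=; rewrite mem_cat => /orP[].
  by case: (0 < a)%N; rewrite ?inE // => /eqP ->.
by case/mapP => v' /IH <- ->.
Qed.

Lemma sumn_lowerings w v : v \in lowerings w -> (sumn v).+1 = sumn w.
Proof.
elim: w v => [|a w IH] v //=; rewrite mem_cat => /orP[].
  by case: a => [|a] //=; rewrite inE => /eqP ->.
by case/mapP => v' /IH <- -> /=; rewrite addnS.
Qed.

(* [weight 0 w] is the coefficient of the monomial w in (x_0 X)^m (see
   coefA_ev).  Reading w from the left, z counts the copies of X to the left
   of the current letter still free to act on it; x_a arises by choosing
   which a of them differentiate it. *)
Fixpoint weight (z : nat) (w : word) : nat :=
  match w with
  | [::] => 1%N
  | a :: w' => ('C(z, a) * weight (z.+1 - a) w')%N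
  end.

Lemma weightS z w :
  weight z.+1 w = (weight z w + \sum_(v <- lowerings w) weight z v)%N.
Proof.
elim: w z => [|a w IH] z /=; first by rewrite big_nil addn0.
rewrite big_cat /= big_map.
case: a => [|a] /=.
  rewrite big_nil add0n !bin0 !mul1n !subn0.
  under eq_bigr do rewrite mul1n.
  exact: IH.
rewrite big_cons big_nil addn0 binS !subSS /= -big_distrr /=.
case: (ltnP a z) => Ha.
  rewrite (_ : (z.+1 - a = (z - a).+1)%N); last by lia.
  rewrite IH; ring.
rewrite (bin_small (_ : z < a.+1)%N); last by lia.
by rewrite !mul0n !add0n addn0.
Qed.

Lemma weight_overflow z w : (z + size w < sumn w)%N -> weight z w = 0%N.
Proof.
elim: w z => [|a w IH] z //= H.
case: (ltnP z a) => Ha; first by rewrite bin_small.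
by rewrite IH ?muln0 //; lia.
Qed.


Section Expansion.
Variable K : fieldType.
Implicit Types (p q : fsum K) (w : word).

Lemma ev_sum p w : ev p w = \sum_(t <- p) t.1 * (t.2 == w)%:R.
Proof.
by rewrite /ev big_mkcond; apply: eq_bigr => t _; case: eqP; rewrite ?mulr1 ?mulr0.
Qed.

Lemma ev_nil w : ev ([::] : fsum K) w = 0.
Proof. by rewrite /ev big_nil. Qed.

Lemma ev_flatten (L : seq (fsum K)) w : ev (flatten L) w = \sum_(p <- L) ev p w.
Proof. by rewrite /ev big_flatten. Qed.

Lemma ev_fscale c p w : ev (fscale c p) w = c * ev p w.
Proof. by rewrite /ev /fscale big_map mulr_sumr. Qed.

Lemma ev_if (b : bool) p w : ev (if b then p else [::]) w = if b then ev p w else 0.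
Proof. by case: b; rewrite ?ev_nil. Qed.

Definition x0 : fsum K := [:: (1, [:: 0%N])].

Lemma ev_x0mul q w : ev (fmul x0 q) w = if w is 0%N :: w' then ev q w' else 0.
Proof.
rewrite /ev /fmul /x0 /= cats0 big_map.
case: w => [|[|a] w'] /=.
- by rewrite big_pred0 // => t.
- by apply: eq_big => [t|t _] //=; rewrite mul1r.
- by rewrite big_pred0 // => t.
Qed.

Lemma Dword_cons a u :
  Dword K (a :: u) = (1, a.+1 :: u) :: [seq (t.1, a :: t.2) | t <- Dword K u].
Proof.
rewrite /Dword /= -map_comp; congr (_ :: _).
by rewrite -(addn0 1%N) iotaDl -map_comp.
Qed.

Lemma ev_Dword u w : ev (Dword K u) w = \sum_(v <- lowerings w) ((u == v)%:R : K).
Proof.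
elim: w u => [|b w IH] [|a u].
- by rewrite /Dword /ev /= !big_nil.
- rewrite [lowerings _]/= big_nil Dword_cons ev_sum big_cons big_map big1 => [|t _];
    by rewrite /= ?mulr0 ?addr0.
- rewrite ev_sum /Dword /= big_nil big1_seq // => v /andP[_ Hv].
  by move: (@size_lowerings (b :: w) v Hv); case: v Hv.
rewrite Dword_cons ev_sum big_cons.
have -> : \sum_(t <- [seq (t.1, a :: t.2) | t <- Dword K u])
             t.1 * ((t.2 == b :: w)%:R : K) = (a == b)%:R * ev (Dword K u) w.
  rewrite big_map ev_sum mulr_sumr; apply: eq_bigr => t _.
  by rewrite eqseq_cons; case: eqP => _ /=; rewrite ?mul1r ?mul0r ?mulr0.
rewrite [lowerings _]/= big_cat big_map /= IH mulr_sumr.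
have -> : \sum_(v <- lowerings w) ((a :: u == b :: v)%:R : K) =
          \sum_(v <- lowerings w) (a == b)%:R * (u == v)%:R.
  by apply: eq_bigr => v _; rewrite eqseq_cons; case: eqP; case: eqP; rewrite ?mul1r ?mul0r.
congr (_ + _).
rewrite eqseq_cons mul1r.
case: b {IH} => [|b] /=; first by rewrite big_nil.
by rewrite big_cons big_nil addr0 eqseq_cons eqSS.
Qed.

Lemma ev_Dsum q w : ev (Dsum q) w = \sum_(v <- lowerings w) ev q v.
Proof.
rewrite /Dsum ev_flatten big_map.
under eq_bigr do rewrite ev_fscale ev_Dword mulr_sumr.
by rewrite exchange_big /=; apply: eq_bigr => v _; rewrite ev_sum.
Qed.

Lemma sum_iota_if s c (f : nat -> K) :
  \sum_(j <- iota 0 s) (if j == c then f j else 0) = if (c < s)%N then f c else 0.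
Proof. by rewrite -big_mkcond -(subn0 s) -/(index_iota 0 s) big_nat1_eq subn0. Qed.

(* Left multiplication by x_0 X in A[X;D]: since X b = b X + D(b), the
   coefficient of X^n in (x_0 X) Q is x_0 Q_{n-1} + x_0 D(Q_n). *)
Lemma coef_x0X_mul (Q : seq (fsum K)) n w :
  ev (nth [::] (omul (x0X K) Q) n) w =
  (if n is n'.+1 then ev (fmul x0 (nth [::] Q n')) w else 0)
  + ev (fmul x0 (Dsum (nth [::] Q n))) w.
Proof.
have x0_nil v : ev (fmul x0 ([::] : fsum K)) v = 0.
  by rewrite ev_x0mul; case: v => [|[|a] v]; rewrite ?ev_nil.
rewrite /omul.
case: (ltnP n (size (x0X K) + size Q)) => Hn; last first.
  rewrite nth_default ?size_mkseq // ev_nil !(nth_default [::] (_ : size Q <= n)%N) /=;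
    try by move: Hn => /=; lia.
  case: n Hn => [|n] Hn; first by move: Hn => /=; lia.
  by rewrite (nth_default [::] (_ : size Q <= n)%N) ?x0_nil ?addr0 //; move: Hn => /=; lia.
rewrite nth_mkseq // ev_flatten big_map.
have -> : iota 0 (size (x0X K)) = [:: 0; 1]%N by [].
rewrite big_cons big_cons big_nil addr0.
rewrite [X in X + _ = _]ev_flatten big_map big1 ?add0r; last first.
  move=> k _; rewrite ev_flatten big_map big1 // => j _.
  by rewrite ev_if; case: ifP => _ //; rewrite ev_fscale ev_nil mulr0.
rewrite ev_flatten big_map.
have -> : iota 0 2 = [:: 0; 1]%N by [].
rewrite big_cons big_cons big_nil addr0.
rewrite [X in X + _ = _]ev_flatten [X in _ + X = _]ev_flatten.
rewrite [X in X + _ = _]big_map [X in _ + X = _]big_map.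
under eq_bigr do rewrite ev_if ev_fscale.
under [X in _ + X = _]eq_bigr do rewrite ev_if ev_fscale.
rewrite subn0 subnn /=.
under eq_bigr do rewrite bin0 mul1r add1n.
under [X in _ + X = _]eq_bigr do rewrite bin1 mul1r add0n.
congr (_ + _); last first.
  by rewrite sum_iota_if; case: ltnP => // Hn'; rewrite nth_default // /Dsum /= x0_nil.
case: n {Hn} => [|n]; first by rewrite big1.
under eq_bigr do rewrite eqSS.
by rewrite sum_iota_if; case: ltnP => // Hn; rewrite nth_default // x0_nil.
Qed.

Definition coef_formula (m n : nat) (w : word) : K :=
  ((size w == m) && (n + sumn w == m)%N)%:R * (weight 0 w)%:R.

Lemma coefA1 n w : ev (coefA K 1 n) w = coef_formula 1 n w.
Proof.
rewrite /coefA /x0Xpow /coef_formula /=.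
case: n => [|[|n]].
- by rewrite ev_nil; case: w => [|[|a] [|b w]] //=; rewrite ?mul0r ?mulr0.
- rewrite /ev big_cons big_nil /=.
  by case: w => [|[|a] [|b w]] //=; rewrite ?mul0r ?mulr0 ?addr0 ?mul1r.
- by rewrite nth_default // ev_nil (_ : (n.+2 + sumn w == 1)%N = false) ?andbF ?mul0r.
Qed.

Lemma coefA_ev m n w : (0 < m)%N -> ev (coefA K m n) w = coef_formula m n w.
Proof.
elim: m n w => [//|m IH] n w _.
case: m IH => [|m] IH; first exact: coefA1.
have IH' := IH _ _ isT; rewrite /coef_formula in IH' *.
rewrite /coefA [x0Xpow K _]/= -/(x0Xpow K m.+1) coef_x0X_mul.
(* only words starting with x_0 occur *)
case: w => [|[|a] w];
  try by case: n => [|n]; rewrite !ev_x0mul /= ?add0r ?addr0 ?mul0r ?mulr0.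
rewrite [X in _ + X]ev_x0mul ev_Dsum.
have -> : \sum_(v <- lowerings w) ev (nth [::] (x0Xpow K m.+1) n) v =
   ((size w == m.+1) && (n + sumn w == m.+2)%N)%:R
   * \sum_(v <- lowerings w) (weight 0 v)%:R.
  rewrite mulr_sumr; apply: eq_big_seq => v Hv.
  by rewrite IH' (size_lowerings Hv) -(sumn_lowerings Hv) addnS eqSS.
rewrite /= bin0 mul1n weightS natrD -natr_sum.
have [/andP[Hsz Hsum]|Hc] := boolP ((size w == m.+1) && (n + sumn w == m.+2)%N).
  case: n Hsum => [|n] Hsum.
    rewrite (weight_overflow (_ : 0 + size w < sumn w)%N) /= ?add0r ?mul1r //.
    by move: Hsz Hsum => /eqP -> /eqP; rewrite add0n => ->.
  rewrite ev_x0mul IH' /= Hsz /=.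
  by move: Hsum; rewrite addSn eqSS => -> /=; rewrite !mul1r.
rewrite !mul0r addr0.
case: n Hc => [//|n] Hc.
by rewrite ev_x0mul IH'; move: Hc; rewrite addSn eqSS => /negbTE -> /=; rewrite mul0r.
Qed.
End Expansion.


Definition block (e : nat) (b : bool) : word :=
  (if b then [:: 1; e; 0] else [:: 0; e; 1])%N ++ nseq 96 0%N.

(* The test word of a sign vector bs: its blocks separated by single x_0's,
   so block number t starts at position 100 t; length 100 (size bs) - 1. *)
Fixpoint test_word (e : nat) (bs : seq bool) : word :=
  match bs with
  | [::] => [::]
  | b :: bs' => block e b ++ (if bs' is [::] then [::] else 0%N :: test_word e bs')
  end.

Fixpoint sign_vectors (n : nat) : seq (seq bool) :=
  if n is n'.+1 then map (cons false) (sign_vectors n') ++ map (cons true) (sign_vectors n')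
  else [:: [::]].

Fixpoint toggle (t : nat) (bs : seq bool) : seq bool :=
  match bs with
  | [::] => [::]
  | b :: bs' => if t is t'.+1 then b :: toggle t' bs' else ~~ b :: bs'
  end.

Fixpoint swap_at (p : nat) (s : word) : word :=
  match p, s with
  | 0%N, a :: b :: c :: s' => c :: b :: a :: s'
  | 0%N, _ => s
  | p'.+1, a :: s' => a :: swap_at p' s'
  | p'.+1, [::] => [::]
  end.

Lemma mem_sign_vectors n bs : (bs \in sign_vectors n) = (size bs == n).
Proof.
elim: n bs => [|n IH] [|b bs] //=.
  by rewrite mem_cat; apply/negP => /orP[] /mapP [].
rewrite mem_cat eqSS; apply/idP/idP.
  by case/orP => /mapP [bs' H [_ ->]]; rewrite -IH.
by move=> H; apply/orP; case: b; [right|left]; apply/mapP; exists bs; rewrite ?IH.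
Qed.

Lemma uniq_sign_vectors n : uniq (sign_vectors n).
Proof.
elim: n => [|n IH] //=.
rewrite cat_uniq !map_inj_uniq //; try by move=> x y [].
rewrite IH /= andbT; apply/hasPn => x /mapP [y _ ->].
by apply/mapP => [[z _ []]].
Qed.

Lemma size_toggle t bs : size (toggle t bs) = size bs.
Proof. by elim: bs t => [|b bs IH] [|t] //=; rewrite IH. Qed.

Lemma toggleK t : involutive (toggle t).
Proof. by move=> bs; elim: bs t => [|b bs IH] [|t] //=; rewrite ?negbK ?IH. Qed.

Lemma perm_toggle t n : perm_eq (map (toggle t) (sign_vectors n)) (sign_vectors n).
Proof.
apply: uniq_perm; rewrite ?uniq_sign_vectors //.
  by rewrite map_inj_uniq ?uniq_sign_vectors //; apply: (inv_inj (toggleK t)).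
move=> bs; apply/mapP/idP.
  by case=> bs' H ->; rewrite mem_sign_vectors size_toggle -mem_sign_vectors.
move=> H; exists (toggle t bs); rewrite ?toggleK //.
by rewrite mem_sign_vectors size_toggle -mem_sign_vectors.
Qed.

Lemma swap_atK p : involutive (swap_at p).
Proof. by move=> s; elim: p s => [|p IH] [|a [|b [|c s]]] //=; rewrite ?IH. Qed.

Lemma size_swap_at p s : size (swap_at p s) = size s.
Proof. by elim: p s => [|p IH] [|a [|b [|c s]]] //=; rewrite ?IH. Qed.

Lemma swap_at_cat u p v : swap_at (size u + p) (u ++ v) = u ++ swap_at p v.
Proof. by elim: u => [|a u IH] //=; rewrite IH. Qed.

Lemma swap_at0_cat (s v : word) :
  (3 <= size s)%N -> swap_at 0 (s ++ v) = swap_at 0 s ++ v.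
Proof. by case: s => [|a [|b [|c s]]]. Qed.

Lemma size_block e b : size (block e b) = 99%N.
Proof. by case: b. Qed.

Lemma size_test_word e bs : size (test_word e bs) = (100 * size bs).-1.
Proof.
elim: bs => [|b bs IH] //=.
by rewrite size_cat size_block; case: bs IH => [|b' bs] //= ->; lia.
Qed.

Lemma test_word_cons e b bs : test_word e (b :: bs) =
  block e b ++ (if bs is [::] then [::] else 0%N :: test_word e bs).
Proof. by []. Qed.

Lemma test_word_toggle e t bs : (t < size bs)%N ->
  test_word e (toggle t bs) = swap_at (100 * t) (test_word e bs).
Proof.
elim: bs t => [|b bs IH] t Ht //.
case: t Ht => [|t] Ht.
  rewrite (_ : toggle 0 (b :: bs) = ~~ b :: bs) // !test_word_cons muln0.
  by rewrite swap_at0_cat ?size_block //; case: b {Ht IH}.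
rewrite (_ : toggle t.+1 (b :: bs) = b :: toggle t bs) //.
case: bs IH Ht => [|b' bs] IH Ht //.
rewrite !test_word_cons.
have -> : (if toggle t (b' :: bs) is [::] then [::]
           else 0%N :: test_word e (toggle t (b' :: bs))) =
          0%N :: test_word e (toggle t (b' :: bs)) by case: t {IH Ht}.
rewrite IH // (_ : (100 * t.+1 = size (block e b) + (100 * t).+1)%N) ?swap_at_cat //.
by rewrite size_block; lia.
Qed.

Lemma test_word_nth e bs t : (t < size bs)%N ->
  nth 0%N (test_word e bs) (100 * t) != nth 0%N (test_word e bs) (100 * t + 2).
Proof.
elim: bs t => [|b bs IH] [|t] //= Ht; first by case: b.
case: bs IH Ht => [|b' bs] IH Ht //=.
rewrite !nth_cat size_block.
rewrite (_ : (100 * t.+1 < 99 = false)%N); last by lia.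
rewrite (_ : (100 * t.+1 + 2 < 99 = false)%N); last by lia.
rewrite (_ : (100 * t.+1 - 99 = (100 * t).+1)%N); last by lia.
rewrite (_ : (100 * t.+1 + 2 - 99 = (100 * t + 2).+1)%N); last by lia.
exact: IH.
Qed.


Section LinearExtension.
Variable K : fieldType.
Implicit Types (p q : fsum K) (H : word -> K).

Definition pair_sum H p : K := \sum_(t <- p) t.1 * H t.2.

Lemma pair_sum_ev H p L : uniq L -> {subset map snd p <= L} ->
  pair_sum H p = \sum_(w <- L) ev p w * H w.
Proof.
move=> uL sub; rewrite /pair_sum.
under [RHS]eq_bigr do rewrite ev_sum mulr_suml.
rewrite exchange_big /=; apply: eq_big_seq => t Ht.
have tL : t.2 \in L by apply: sub; apply: map_f.
rewrite (bigD1_seq t.2) //= eqxx mulr1 big1 ?addr0 // => w /negPf Hw.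
by rewrite eq_sym Hw mulr0 mul0r.
Qed.

Lemma pair_sum_eq H p q : ev p =1 ev q -> pair_sum H p = pair_sum H q.
Proof.
move=> E; set L := undup (map snd p ++ map snd q).
rewrite (@pair_sum_ev H p L) ?(@pair_sum_ev H q L) ?undup_uniq //.
- by apply: eq_bigr => w _; rewrite E.
- by move=> w Hw; rewrite mem_undup mem_cat Hw orbT.
- by move=> w Hw; rewrite mem_undup mem_cat Hw.
Qed.

Lemma pair_sum_supp0 H p : (forall w, ev p w != 0 -> H w = 0) -> pair_sum H p = 0.
Proof.
move=> HH; rewrite (@pair_sum_ev H p (undup (map snd p))) ?undup_uniq //; last first.
  by move=> w; rewrite mem_undup.
rewrite big1 // => w _; have [->|/HH ->] := eqVneq (ev p w) 0.
  by rewrite mul0r.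
by rewrite mulr0.
Qed.

Lemma pair_sum_fmul H p q :
  pair_sum H (fmul p q) = \sum_(a <- p) \sum_(b <- q) a.1 * b.1 * H (a.2 ++ b.2).
Proof. by rewrite /pair_sum /fmul big_allpairs_dep. Qed.

End LinearExtension.

Section TestFunctional.
Variable K : fieldType.
Variables (e h : nat).

Definition sign (bs : seq bool) : K := \prod_(b <- bs) (if b then -1 else 1).

Definition chi (w : word) : K :=
  \sum_(bs <- sign_vectors h) sign bs * (test_word e bs == w)%:R.
Definition phi (p : fsum K) : K :=
  \sum_(bs <- sign_vectors h) sign bs * ev p (test_word e bs).

Lemma sign_toggle t bs : (t < size bs)%N -> sign (toggle t bs) = - sign bs.
Proof.
elim: bs t => [|b bs IH] [|t] //= Ht.
  by rewrite /sign !big_cons; case: b => /=; rewrite ?mulN1r ?mul1r ?opprK.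
by rewrite /sign !big_cons -/(sign _) IH // mulrN.
Qed.

Lemma phiE p : phi p = pair_sum chi p.
Proof.
rewrite /phi /chi /pair_sum; under eq_bigr do rewrite ev_sum mulr_sumr.
rewrite exchange_big /=; apply: eq_bigr => t _.
rewrite mulr_sumr; apply: eq_bigr => bs _.
by rewrite mulrCA eq_sym.
Qed.

Lemma chi_swap t w : (t < h)%N -> chi (swap_at (100 * t) w) = - chi w.
Proof.
move=> Ht; rewrite /chi -(perm_big _ (perm_toggle t h)) big_map -sumrN.
apply: eq_big_seq => bs; rewrite mem_sign_vectors => /eqP Hs.
by rewrite sign_toggle ?Hs // test_word_toggle ?Hs // (can_eq (swap_atK _)) mulNr.
Qed.

Lemma chi_size w : size w != (100 * h).-1 -> chi w = 0.
Proof.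
move=> Hw; rewrite /chi big1_seq // => bs /andP[_]; rewrite mem_sign_vectors => /eqP Hs.
case: eqP => [E|_]; last by rewrite mulr0.
by move: Hw; rewrite -E size_test_word Hs eqxx.
Qed.

(* Generators of the first kind in Z_1, placed at a block boundary, are
   killed by chi: test words have distinct first and third block letters. *)
Lemma chi_type1 x s y t : size x = (100 * t)%N -> size s = 99%N ->
  nth 0%N s 0 = nth 0%N s 2 -> chi (x ++ s ++ y) = 0.
Proof.
move=> Hx Hs Hq; rewrite /chi big1_seq // => bs /andP[_].
rewrite mem_sign_vectors => /eqP Hb.
case: eqP => [E|_]; last by rewrite mulr0.
have Hsz : size (test_word e bs) = size (x ++ s ++ y) by rewrite E.
rewrite size_test_word !size_cat Hb Hx Hs in Hsz.
have Ht : (t < size bs)%N by rewrite Hb; lia.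
have := test_word_nth e Ht; rewrite E !nth_cat Hx ltnn subnn.
rewrite (_ : (100 * t + 2 < 100 * t = false)%N); last by lia.
rewrite (_ : (100 * t + 2 - 100 * t = 2)%N); last by lia.
by rewrite Hs /= Hq eqxx.
Qed.

Lemma type2_swap (s1 s2 : word) : size s1 = 99%N -> size s2 = 99%N ->
  nth 0%N s1 0 = nth 0%N s2 2 -> nth 0%N s1 2 = nth 0%N s2 0 ->
  (forall q, q <> 0%N -> q <> 2%N -> nth 0%N s1 q = nth 0%N s2 q) ->
  s2 = swap_at 0 s1.
Proof.
case: s1 => [|a [|b [|c r1]]] //; case: s2 => [|a' [|b' [|c' r2]]] //= H1 H2 E0 E2 Eq.
apply: (@eq_from_nth _ 0%N); first by rewrite /= H1 H2.
move=> [|[|[|i]]] Hi /=; rewrite ?E0 ?E2 //.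
  by have /= -> := Eq 1%N.
by have /= -> := Eq i.+3.
Qed.

Lemma chi_type2 x s y t : size x = (100 * t)%N -> size s = 99%N ->
  chi (x ++ s ++ y) + chi (x ++ swap_at 0 s ++ y) = 0.
Proof.
move=> Hx Hs.
have -> : x ++ swap_at 0 s ++ y = swap_at (100 * t) (x ++ s ++ y).
  by rewrite -Hx -(addn0 (size x)) swap_at_cat swap_at0_cat ?Hs.
case: (ltnP t h) => Ht; first by rewrite chi_swap // addrN.
by rewrite !chi_size ?addr0 // ?size_swap_at !size_cat Hx Hs; apply/eqP; lia.
Qed.

Lemma phi_generator t u z v : inA (100 * t) u -> inZ1 z ->
  phi (fmul (fmul u z) v) = 0.
Proof.
move=> Hu Hz.
pose H2 x s := \sum_(c <- v) c.1 * chi (x ++ s ++ c.2).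
transitivity (pair_sum (fun x => pair_sum (H2 x) z) u).
  rewrite phiE pair_sum_fmul {1}/fmul big_allpairs_dep /pair_sum.
  apply: eq_bigr => a _; rewrite mulr_sumr; apply: eq_bigr => b _.
  rewrite /H2 !mulr_sumr; apply: eq_bigr => c _.
  by rewrite -catA !mulrA.
apply: pair_sum_supp0 => x /Hu Hx.
case: Hz => [[k [s [Hs [Hq E]]]] |
             [k [s1 [s2 [l1 [l2 [Hs1 [Hs2 [_ [E1 [E2 [E3 [E4 [Eq E]]]]]]]]]]]]]].
  rewrite (pair_sum_eq _ E) /pair_sum big_cons big_nil addr0 /= /H2 big1 ?mulr0 //.
  by move=> c _; rewrite (chi_type1 c.2 Hx Hs Hq) mulr0.
rewrite (pair_sum_eq _ E) /pair_sum big_cons big_cons big_nil addr0 /=.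
rewrite (type2_swap Hs1 Hs2) ?E1 ?E2 ?E3 ?E4 //.
rewrite -mulrDr /H2 -big_split /= big1 ?mulr0 // => c _.
by rewrite -mulrDr (chi_type2 c.2 Hx Hs1) mulr0.
Qed.

Lemma phi_B1 a : inB1 a -> phi a = 0.
Proof.
case=> l [Hl E]; rewrite phiE (pair_sum_eq _ E) -phiE.
rewrite /phi; under eq_bigr do rewrite ev_flatten big_map mulr_sumr.
rewrite exchange_big big1_seq //= => g Hg.
have [Hu Hz] := Hl g Hg.
exact: (phi_generator g.2 Hu Hz).
Qed.
End TestFunctional.


(* The number of copies of X left of the letter following w, when z were
   left of w; weights are multiplicative along concatenation. *)
Fixpoint weight_shift (z : nat) (w : word) : nat :=
  match w with [::] => z | a :: w' => weight_shift (z.+1 - a) w' end.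

Lemma weight_cat z u v : weight z (u ++ v) = (weight z u * weight (weight_shift z u) v)%N.
Proof. by elim: u z => [|a u IH] z /=; rewrite ?mul1n // IH mulnA. Qed.

Lemma weight_shift_cat z u v : weight_shift z (u ++ v) = weight_shift (weight_shift z u) v.
Proof. by elim: u z => [|a u IH] z //=. Qed.

Lemma weight_nseq0 z k : weight z (nseq k 0%N) = 1%N.
Proof. by elim: k z => [|k IH] z //=; rewrite IH bin0. Qed.

Lemma weight_shift_nseq0 z k : weight_shift z (nseq k 0%N) = (z + k)%N.
Proof. by elim: k z => [|k IH] z //=; rewrite ?addn0 // IH subn0 addnS. Qed.

Lemma weight_cons0 z w : weight z (0%N :: w) = weight z.+1 w.
Proof. by rewrite /= bin0 mul1n subn0. Qed.

Lemma weight_shift_block e b z : (e <= 1)%N -> weight_shift z (block e b) = (z + 98 - e)%N.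
Proof.
rewrite /block weight_shift_cat weight_shift_nseq0.
by case: e => [|[|e]] // _; case: b => /=; lia.
Qed.

Lemma weight_block e b z :
  weight z (block e b) = weight z (if b then [:: 1; e; 0] else [:: 0; e; 1])%N.
Proof. by rewrite /block weight_cat weight_nseq0 muln1. Qed.

Lemma sumn_test_word e bs : sumn (test_word e bs) = ((1 + e) * size bs)%N.
Proof.
elim: bs => [|b bs IH]; first by rewrite muln0.
rewrite test_word_cons sumn_cat /block sumn_cat (_ : sumn (nseq 96 0%N) = 0%N) //.
case: bs IH => [|b' bs] IH; first by case: b => /=; lia.
by rewrite /= add0n IH; case: b => /=; lia.
Qed.

Section Evaluation.
Variable K : fieldType.

Lemma sign_cons b bs : sign K (b :: bs) = (if b then -1 else 1) * sign K bs.
Proof. by rewrite /sign big_cons. Qed.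

Definition block_diff (e z : nat) : K :=
  (weight z (block e false))%:R - (weight z (block e true))%:R.

Lemma signed_weight_sum e (c : K) : (e <= 1)%N -> (forall z, block_diff e z = c) ->
  forall n z, \sum_(bs <- sign_vectors n.+1) sign K bs * (weight z (test_word e bs))%:R
              = c ^+ n.+1.
Proof.
move=> He Hd; elim=> [|n IH] z.
  rewrite [sign_vectors _]/= !big_cons big_nil addr0 /sign !big_cons !big_nil.
  have single b : test_word e [:: b] = block e b by rewrite /= cats0.
  by rewrite !single -(Hd z) /block_diff !mulr1 mul1r mulN1r expr1.
rewrite (_ : sign_vectors n.+2 = map (cons false) (sign_vectors n.+1)
                              ++ map (cons true) (sign_vectors n.+1)) //.
rewrite big_cat !big_map.
have split_block b bs : bs \in sign_vectors n.+1 ->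
   sign K (b :: bs) * (weight z (test_word e (b :: bs)))%:R =
   (if b then -1 else 1) * (weight z (block e b))%:R *
   (sign K bs * (weight (z + 99 - e) (test_word e bs))%:R).
  rewrite mem_sign_vectors; case: bs => [|b' bs] // _.
  rewrite test_word_cons weight_cat weight_shift_block // weight_cons0 sign_cons natrM.
  by rewrite (_ : ((z + 98 - e).+1 = z + 99 - e)%N) //; [ring | lia].
rewrite (eq_big_seq _ (split_block false)) (eq_big_seq _ (split_block true)).
rewrite -!mulr_sumr !IH -(Hd z) /block_diff.
set A := (weight z (block e false))%:R; set B := (weight z (block e true))%:R.
by rewrite /= !exprS; ring.
Qed.

(* phi evaluated on a_i with i = m - (1 + e) h: only test words occur, each
   with coefficient its weight, so phi (a_i) = c^h. *)
Lemma phi_coefA e (c : K) h : (e <= 1)%N -> (0 < h)%N -> (forall z, block_diff e z = c) ->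
  phi e h (coefA K (100 * h - 1) ((100 * h - 1) - (1 + e) * h)) = c ^+ h.
Proof.
move=> He; case: h => [//|h] _ Hd.
rewrite -(signed_weight_sum He Hd h 0) /phi.
apply: eq_big_seq => bs; rewrite mem_sign_vectors => /eqP Hs.
rewrite coefA_ev /coef_formula; last by lia.
rewrite size_test_word sumn_test_word Hs (_ : (100 * h.+1).-1 = 100 * h.+1 - 1)%N; last by lia.
rewrite eqxx /= (_ : (100 * h.+1 - 1 - (1 + e) * h.+1 + (1 + e) * h.+1 ==
   100 * h.+1 - 1)%N) ?mul1r //.
have : ((1 + e) * h.+1 <= 2 * h.+1)%N by rewrite leq_mul2r; lia.
by move: ((1 + e) * h.+1)%N => X HX; apply/eqP; lia.
Qed.

(* Blocks x_0 x_0 x_1 / x_1 x_0 x_0 give the difference (z + 2) - z = 2. *)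
Lemma block_diff0 z : block_diff 0 z = 2.
Proof.
rewrite /block_diff !weight_block /= !bin0 !subn0 !bin1 !muln1 !mul1n.
by rewrite -addn2 natrD addrAC subrr add0r.
Qed.

(* Blocks x_0 x_1 x_1 / x_1 x_1 x_0 give (z + 1)^2 - z^2 = 2 z + 1, which is
   1 in characteristic 2. *)
Lemma block_diff1 z : (2%:R : K) = 0 -> block_diff 1 z = 1.
Proof.
move=> H2.
rewrite /block_diff !weight_block /= !bin0 !subn0 !bin1 !muln1 !mul1n subn1 /=.
rewrite !natrM -addn1 natrD.
have -> : (z%:R + 1) * (z%:R + 1) - z%:R * z%:R = 2%:R * z%:R + 1 :> K by ring.
by rewrite H2 mul0r add0r.
Qed.

End Evaluation.


Lemma last_witness (P : nat -> Prop) N j0 : P j0 -> (forall j, (N <= j)%N -> ~ P j) ->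
  exists i, (j0 <= i)%N /\ P i /\ forall j, (i < j)%N -> ~ P j.
Proof.
elim: N => [|N IH] Pj0 HN; first by case: (HN j0).
case: (classic (P N)) => [PN|nPN].
  exists N; split; last by split => // j Hj; apply: HN.
  by case: (leqP j0 N) => // /HN.
apply: IH => // j; rewrite leq_eqVlt => /orP[/eqP <- //|]; exact: HN.
Qed.

(* Some a_i with i > 3(m+1)/4 lies outside B_1: take e = 0, c = 2 if
   2 is invertible in K and e = 1, c = 1 in characteristic 2. *)
Lemma coefA_notB1 (K : fieldType) h : (0 < h)%N ->
  exists i, (3 * 100 * h < 4 * i)%N /\ ~ inB1 (coefA K (100 * h - 1) i).
Proof.
move=> hpos.
have key e (c : K) : (e <= 1)%N -> c ^+ h != 0 -> (forall z, block_diff K e z = c) ->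
    ~ inB1 (coefA K (100 * h - 1) ((100 * h - 1) - (1 + e) * h)).
  by move=> He Hc Hd /(phi_B1 e h); rewrite (phi_coefA He hpos Hd); apply/eqP.
have [H2|H2] := eqVneq (2%:R : K) 0.
  exists ((100 * h - 1) - (1 + 1) * h)%N; split; first lia.
  by apply: (key 1 1) => //; [rewrite expr1n oner_neq0 | move=> z; apply: block_diff1].
exists ((100 * h - 1) - (1 + 0) * h)%N; split; first lia.
by apply: (key 0 2) => //; [rewrite expf_neq0 | exact: block_diff0].
Qed.

Theorem mainTheorem6 (K : fieldType) (h : nat) (hpos : (0 < h)%N) :
  let m := (100 * h - 1)%N in
  exists i : nat,
    (3 * (m + 1) < 4 * i)%N /\
    ~ inB1 (coefA K m i) /\
    (forall j : nat, (i < j)%N -> inB1 (coefA K m j)).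
Proof.
move=> m.
have [j0 [Hj0 Pj0]] := coefA_notB1 K hpos.
(* beyond the length of (x_0 X)^m the coefficients are the empty sum *)
have Hbig j : (size (x0Xpow K m) <= j)%N -> ~ ~ inB1 (coefA K m j).
  by move=> Hj; apply; exists [::]; split => // w; rewrite /coefA nth_default.
have [i [Hi [Pi Hmax]]] := last_witness Pj0 Hbig.
exists i; split; first by rewrite /m; lia.
by split => // j Hj; exact: NNPP (Hmax j Hj).
Qed.
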